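(* Let $H$ be a group, $K\lneq H$, $\phi\in\operatorname{Aut}(H)$, $G=\langle H,t;\ tkt^{-1}=\phi(k),\ k\in K\rangle$. The map $\chi_2:\operatorname{Out}_H^{(V)}(G)\to N_H(K)/Z(H)K$ sending the outer class of $\alpha_{(\gamma_b,a)}$ to $bZ(H)K$ is a well-defined surjective homomorphism with kernel $C_K$.
   Context: $\gamma_b$ denotes $h\mapsto b^{-1}hb$. For $\delta\in\operatorname{Aut}(H)$ and $a\in H$ with $\delta(K)=K$ and $\phi(\delta(k))=a^{-1}\delta(\phi(k))a$ for all $k\in K$, $\alpha_{(\delta,a)}$ denotes the automorphism of $G$ given by $h\mapsto\delta(h)$ ($h\in H$), $t\mapsto at$. $\operatorname{Out}_H^{(V)}(G)$ is the subgroup of $\operatorname{Out}(G)$ consisting of the outer classes of the automorphisms $\alpha_{(\gamma_b,a)}$, where $b\in N_H(K)$, $a\in H$ and $ba\phi(b)^{-1}\in C_H(\phi(K))$. $C_K$ is the subgroup of outer classes of $\alpha_{(1,a)}$ with $a\in C_H(\phi(K))$. Automorphisms are composed left to right. *)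

Set Implicit Arguments.
Unset Strict Implicit.

Record Group := MkGroup {
  car :> Type;
  gmul : car -> car -> car;
  gone : car;
  ginv : car -> car;
  gmulA : forall x y z, gmul x (gmul y z) = gmul (gmul x y) z;
  gmul1l : forall x, gmul gone x = x;
  gmul1r : forall x, gmul x gone = x;
  gmulVl : forall x, gmul (ginv x) x = gone;
  gmulVr : forall x, gmul x (ginv x) = gone
}.

Arguments gmul {g} x y.
Arguments gone {g}.
Arguments ginv {g} x.

Declare Scope grp_scope.
Delimit Scope grp_scope with grp.
Notation "x * y" := (gmul x y) : grp_scope.
Notation "x ^-1" := (ginv x) (at level 3, left associativity, format "x ^-1") : grp_scope.
Notation "1" := gone : grp_scope.
Open Scope grp_scope.

Definition subgroup (H : Group) (K : H -> Prop) : Prop :=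
  K 1 /\ (forall x y, K x -> K y -> K (x * y)) /\ (forall x, K x -> K (x^-1)).

Definition proper_subgroup (H : Group) (K : H -> Prop) : Prop :=
  subgroup K /\ exists h, ~ K h.

Definition is_hom (A B : Group) (f : A -> B) : Prop :=
  forall x y, f (x * y) = f x * f y.

Definition is_aut (A : Group) (f : A -> A) : Prop :=
  is_hom f /\ exists g : A -> A, (forall x, g (f x) = x) /\ (forall x, f (g x) = x).

Definition gamma (H : Group) (b : H) : H -> H := fun h => b^-1 * h * b.

Definition normalizer (H : Group) (K : H -> Prop) (b : H) : Prop :=
  forall k, K k <-> K (b^-1 * k * b).

Definition centralizer (H : Group) (S : H -> Prop) (c : H) : Prop :=
  forall s, S s -> c * s = s * c.

Definition image (A B : Group) (f : A -> B) (K : A -> Prop) (y : B) : Prop :=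
  exists k, K k /\ f k = y.

Definition center (H : Group) (z : H) : Prop := forall h, z * h = h * z.

(* b Z(H)K = b' Z(H)K, i.e. b^-1 b' in Z(H)K *)
Definition same_cosetZK (H : Group) (K : H -> Prop) (b b' : H) : Prop :=
  exists z k, center z /\ K k /\ b^-1 * b' = z * k.

(* G is the HNN extension <H, t ; t k t^-1 = phi(k), k in K>, characterized
   (up to isomorphism) by its universal property, with i : H -> G the
   canonical map. *)
Definition is_HNN (H : Group) (K : H -> Prop) (phi : H -> H)
  (G : Group) (i : H -> G) (t : G) : Prop :=
  is_hom i /\
  (forall k, K k -> t * i k * t^-1 = i (phi k)) /\
  forall (X : Group) (f : H -> X) (x : X),
    is_hom f -> (forall k, K k -> x * f k * x^-1 = f (phi k)) ->
    exists F : G -> X,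
      is_hom F /\ (forall h, F (i h) = f h) /\ F t = x /\
      forall F' : G -> X, is_hom F' -> (forall h, F' (i h) = f h) -> F' t = x ->
        forall g, F' g = F g.

Definition is_alpha (H G : Group) (i : H -> G) (t : G)
  (delta : H -> H) (a : H) (alpha : G -> G) : Prop :=
  is_aut alpha /\ (forall h, alpha (i h) = i (delta h)) /\ alpha t = i a * t.

Definition in_V (H : Group) (K : H -> Prop) (phi : H -> H) (G : Group)
  (i : H -> G) (t : G) (b a : H) (alpha : G -> G) : Prop :=
  normalizer K b /\ centralizer (image phi K) (b * a * (phi b)^-1) /\
  is_alpha i t (gamma b) a alpha.

Definition same_outer (G : Group) (alpha beta : G -> G) : Prop :=
  exists g : G, forall x, beta x = g^-1 * alpha x * g.

Definition comp_lr (G : Group) (alpha beta : G -> G) : G -> G :=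
  fun x => beta (alpha x).

(* Britton's normal forms for the HNN extension G give three facts: i is injective,
   t i(u) t^-1 lies in i(H) only if u lies in K, and, K being proper, every element of G
   centralising i(H) lies in i(H).  If alpha_(gamma_b', a') is alpha_(gamma_b, a) followed
   by conjugation by g, then i(b) g i(b')^-1 centralises i(H), so g = i(x b^-1 b') with x
   central in H, and comparing the images of t puts x b^-1 b' in K: b Z(H)K = b' Z(H)K.
   Composition multiplies the b's, every b in N_H(K) occurs (with a = b^-1 phi(b)), and
   when b lies in Z(H)K its K-part is absorbed by an inner automorphism, leaving an
   automorphism alpha_(1, a') with a' in C_H(phi(K)). *)

From Stdlib Require Import Classical ClassicalEpsilon FunctionalExtensionality PropExtensionality List.
Import ListNotations.

Section GroupFacts.
Context {G : Group}.
Implicit Types x y z : G.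

Lemma mulKg x y : x^-1 * (x * y) = y.
Proof. rewrite gmulA, gmulVl, gmul1l. reflexivity. Qed.
Lemma mulKVg x y : x * (x^-1 * y) = y.
Proof. rewrite gmulA, gmulVr, gmul1l. reflexivity. Qed.
Lemma mulgK x y : y * x * x^-1 = y.
Proof. rewrite <- gmulA, gmulVr, gmul1r. reflexivity. Qed.
Lemma mulgI x y z : x * y = x * z -> y = z.
Proof. intro E. rewrite <- (mulKg x y), E, mulKg. reflexivity. Qed.
Lemma invg_unique x y : x * y = 1 -> x^-1 = y.
Proof. intro E. apply (mulgI x). rewrite gmulVr, E. reflexivity. Qed.
Lemma invgK x : x^-1^-1 = x.
Proof. apply invg_unique, gmulVl. Qed.
Lemma invMg x y : (x * y)^-1 = y^-1 * x^-1.
Proof. apply invg_unique. rewrite <- gmulA, (gmulA y), gmulVr, gmul1l, gmulVr. reflexivity. Qed.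
Lemma invg1 : (1 : G)^-1 = 1.
Proof. apply invg_unique, gmul1l. Qed.

Lemma center1 : center (1 : G).
Proof. intro h. rewrite gmul1l, gmul1r. reflexivity. Qed.
Lemma centerV z : center z -> center (z^-1).
Proof. intros Cz h. apply (mulgI z). rewrite mulKVg, gmulA, Cz, mulgK. reflexivity. Qed.
Lemma centerM y z : center y -> center z -> center (y * z).
Proof. intros Cy Cz h. rewrite <- gmulA, Cz, gmulA, Cy, gmulA. reflexivity. Qed.
End GroupFacts.

Ltac gsimpl := repeat (rewrite ?gmul1l, ?gmul1r, ?gmulVl, ?gmulVr, ?mulKg, ?mulKVg,
                               ?invgK, ?invMg, ?invg1, <- ?gmulA).

Section Homomorphisms.
Context {A B : Group} (f : A -> B).
Hypothesis f_hom : is_hom f.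

Lemma hom1 : f 1 = 1.
Proof. apply (mulgI (f 1)). rewrite <- f_hom, !gmul1r. reflexivity. Qed.
Lemma homV x : f (x^-1) = (f x)^-1.
Proof. symmetry. apply invg_unique. rewrite <- f_hom, gmulVr. exact hom1. Qed.
End Homomorphisms.

Lemma hom_inverse {A B : Group} (f : A -> B) (g : B -> A) :
  is_hom f -> (forall x, g (f x) = x) -> (forall y, f (g y) = y) -> is_hom g.
Proof.
  intros f_hom gK fK x y. rewrite <- (fK x), <- (fK y) at 1. rewrite <- f_hom. apply gK.
Qed.

Lemma is_aut_comp {A : Group} {f g : A -> A} : is_aut f -> is_aut g -> is_aut (comp_lr f g).
Proof.
  intros [f_hom [f' [f'K fK]]] [g_hom [g' [g'K gK]]]. unfold comp_lr. split.
  - intros x y. rewrite f_hom, g_hom. reflexivity.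
  - exists (fun x => f' (g' x)). split; intro x; rewrite ?g'K, ?f'K, ?fK, ?gK; reflexivity.
Qed.

Lemma is_aut_conj {A : Group} {f : A -> A} (g : A) : is_aut f -> is_aut (fun x => g^-1 * f x * g).
Proof.
  intros [f_hom [f' [f'K fK]]]. split.
  - intros x y. rewrite f_hom. gsimpl. reflexivity.
  - exists (fun y => f' (g * y * g^-1)). split; intro x.
    + gsimpl. apply f'K.
    + rewrite fK. gsimpl. reflexivity.
Qed.

Lemma subgroupV {H : Group} (S : H -> Prop) x : subgroup S -> S (x^-1) <-> S x.
Proof.
  intros [_ [_ SV]]. split; intro Sx; [rewrite <- (invgK x)|]; apply SV; exact Sx.
Qed.

Lemma subgroupMl {H : Group} (S : H -> Prop) x y :
  subgroup S -> S x -> S (x * y) <-> S y.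
Proof.
  intros [_ [SM SV]] Sx. split; intro Sy.
  - rewrite <- (mulKg x y). apply SM; auto.
  - apply SM; auto.
Qed.

Section NormalizersCentralizers.
Context {H : Group}.

Lemma normalizerM (S : H -> Prop) b b' :
  normalizer S b -> normalizer S b' -> normalizer S (b * b').
Proof.
  intros Nb Nb' k. rewrite (Nb k), (Nb' (b^-1 * k * b)). gsimpl. reflexivity.
Qed.

Lemma normalizer1 (S : H -> Prop) : normalizer S 1.
Proof. intro k. gsimpl. reflexivity. Qed.

Lemma normalizer_image (K : H -> Prop) (phi : H -> H) b :
  is_hom phi -> normalizer K b -> normalizer (image phi K) (phi b).
Proof.
  intros phi_hom Nb s. split.
  - intros [k [Kk <-]]. exists (b^-1 * k * b). split; [exact (proj1 (Nb k) Kk)|].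
    rewrite !phi_hom, (homV _ phi_hom). reflexivity.
  - intros [k [Kk Ek]]. exists (b * k * b^-1). split.
    + apply (Nb (b * k * b^-1)). gsimpl. exact Kk.
    + rewrite !phi_hom, (homV _ phi_hom), Ek. gsimpl. reflexivity.
Qed.

Lemma centralizerM (S : H -> Prop) c c' :
  centralizer S c -> centralizer S c' -> centralizer S (c * c').
Proof. intros Cc Cc' s Ss. rewrite <- gmulA, Cc', gmulA, Cc, gmulA by exact Ss. reflexivity. Qed.

Lemma centralizer_conj (S : H -> Prop) n c :
  normalizer S n -> centralizer S c -> centralizer S (n * c * n^-1).
Proof.
  intros Nn Cc s Ss.
  replace (n * c * n^-1 * s) with (n * (c * (n^-1 * s * n)) * n^-1) by (gsimpl; reflexivity).
  rewrite Cc by exact (proj1 (Nn s) Ss). gsimpl. reflexivity.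
Qed.

Lemma centralizer_center (S : H -> Prop) z : center z -> centralizer S z.
Proof. intros Cz s _. apply Cz. Qed.
End NormalizersCentralizers.

Lemma gamma_hom {H : Group} (b : H) : is_hom (gamma b).
Proof. intros x y. unfold gamma. gsimpl. reflexivity. Qed.

Lemma gammaK {H : Group} (b h : H) : gamma (b^-1) (gamma b h) = h.
Proof. unfold gamma. gsimpl. reflexivity. Qed.

Lemma same_outer_refl {G : Group} (alpha : G -> G) : same_outer alpha alpha.
Proof. exists 1. intro x. gsimpl. reflexivity. Qed.

Lemma same_cosetZK_refl {H : Group} (K : H -> Prop) b : subgroup K -> same_cosetZK K b b.
Proof. intro K_sub. exists 1, 1. split; [apply center1|split; [apply K_sub|gsimpl; reflexivity]]. Qed.

(** * Permutation groups *)

Record perm (T : Type) := Perm {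
  pfun : T -> T; pinv : T -> T;
  pfunK : forall x, pfun (pinv x) = x; pinvK : forall x, pinv (pfun x) = x }.
Arguments Perm {T}.
Arguments pfun {T} p x.
Arguments pinv {T} p x.
Arguments pfunK {T}.
Arguments pinvK {T}.

Lemma perm_ext (T : Type) (p q : perm T) : (forall x, pfun p x = pfun q x) -> p = q.
Proof.
  destruct p as [f1 b1 e1 e2], q as [f2 b2 e3 e4]; simpl; intro E.
  assert (f1 = f2) by (apply functional_extensionality; auto). subst f2.
  assert (b1 = b2).
  { apply functional_extensionality. intro x. rewrite <- (e3 x) at 1. rewrite e2. reflexivity. }
  subst b2. rewrite (proof_irrelevance _ e1 e3), (proof_irrelevance _ e2 e4). reflexivity.
Qed.

Section SymmetricGroup.
Variable T : Type.

Definition perm_mul (p q : perm T) : perm T.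
refine (Perm (fun x => pfun p (pfun q x)) (fun x => pinv q (pinv p x)) _ _);
  intro x; rewrite ?pfunK, ?pinvK; reflexivity.
Defined.
Definition perm_one : perm T := Perm (fun x => x) (fun x => x) (fun _ => eq_refl) (fun _ => eq_refl).
Definition perm_inv (p : perm T) : perm T := Perm (pinv p) (pfun p) (pinvK p) (pfunK p).

Definition Sym : Group.
refine (@MkGroup (perm T) perm_mul perm_one perm_inv _ _ _ _ _);
  intros; apply perm_ext; simpl; intros; rewrite ?pfunK, ?pinvK; reflexivity.
Defined.

Definition swap_fun (a b x : T) : T :=
  if excluded_middle_informative (x = a) then b
  else if excluded_middle_informative (x = b) then a else x.

Lemma swap_fun_l a b : swap_fun a b a = b.
Proof. unfold swap_fun. destruct (excluded_middle_informative (a = a)); congruence. Qed.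

Lemma swap_fun_r a b : swap_fun a b b = a.
Proof.
  unfold swap_fun. destruct (excluded_middle_informative (b = a)); [congruence|].
  destruct (excluded_middle_informative (b = b)); congruence.
Qed.

Lemma swap_fun_id a b x : x <> a -> x <> b -> swap_fun a b x = x.
Proof.
  intros na nb. unfold swap_fun.
  destruct (excluded_middle_informative (x = a)); [tauto|].
  destruct (excluded_middle_informative (x = b)); tauto.
Qed.

Lemma swap_funK a b x : swap_fun a b (swap_fun a b x) = x.
Proof.
  destruct (classic (x = a)) as [->|na]; [rewrite swap_fun_l; apply swap_fun_r|].
  destruct (classic (x = b)) as [->|nb]; [rewrite swap_fun_r; apply swap_fun_l|].
  rewrite !(swap_fun_id a b x na nb). reflexivity.
Qed.

Definition swap (a b : T) : Sym := Perm (swap_fun a b) (swap_fun a b) (swap_funK a b) (swap_funK a b).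

Lemma swap_commute (p : Sym) a b :
  pfun p a = a -> pfun p b = b -> p * swap a b = swap a b * p.
Proof.
  intros pa pb. apply perm_ext. intro x. simpl.
  destruct (classic (x = a)) as [->|na]; [rewrite swap_fun_l, pa, pb, swap_fun_l; reflexivity|].
  destruct (classic (x = b)) as [->|nb]; [rewrite swap_fun_r, pa, pb, swap_fun_r; reflexivity|].
  assert (p_inj : forall y, pfun p x = pfun p y -> x = y).
  { intros y E. rewrite <- (pinvK p x), E, pinvK. reflexivity. }
  rewrite (swap_fun_id a b x na nb), (swap_fun_id a b (pfun p x)); [reflexivity| |];
    intro E; [apply na|apply nb]; apply p_inj; congruence.
Qed.
End SymmetricGroup.

Definition ltrans {G : Group} (g : G) : Sym (G -> Prop).
refine (Perm (fun A y => A (g^-1 * y)) (fun A y => A (g * y)) _ _); intro A;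
  apply functional_extensionality; intro y; rewrite ?mulKg, ?mulKVg; reflexivity.
Defined.

Lemma ltrans_hom (G : Group) : is_hom (@ltrans G).
Proof.
  intros x y. apply perm_ext. intro A. simpl.
  apply functional_extensionality. intro z. rewrite invMg, gmulA. reflexivity.
Qed.

(** * The HNN extension *)

Section HNNUniversal.
Context {H : Group} {K : H -> Prop} {phi : H -> H} {G : Group} {i : H -> G} {t : G}.
Hypothesis HN : is_HNN K phi i t.

Lemma HNN_hom : is_hom i.
Proof. apply HN. Qed.

Lemma HNN_rel k : K k -> t * i k = i (phi k) * t.
Proof. intro Kk. destruct HN as [_ [rel _]]. rewrite <- rel by exact Kk. gsimpl. reflexivity. Qed.

Lemma HNN_hom_ext (X : Group) (F1 F2 : G -> X) :
  is_hom F1 -> is_hom F2 -> (forall h, F1 (i h) = F2 (i h)) -> F1 t = F2 t ->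
  forall g, F1 g = F2 g.
Proof.
  intros F1hom F2hom Ei Et.
  destruct HN as [ihom [rel U]].
  destruct (U X (fun h => F1 (i h)) (F1 t)) as [F [_ [_ [_ Funiq]]]].
  - intros x y. rewrite ihom. apply F1hom.
  - intros k Kk. rewrite <- (homV _ F1hom), <- !F1hom, rel by exact Kk. reflexivity.
  - intro g. rewrite (Funiq F1 F1hom), (Funiq F2 F2hom); auto.
Qed.

(* Translation of subsets by an element of S fixes both S and the empty set, hence
   commutes with the transposition tau exchanging them.  By uniqueness in the universal
   property every translation commutes with tau, so translation by g fixes S. *)
Lemma HNN_generated (S : G -> Prop) :
  subgroup S -> (forall h, S (i h)) -> S t -> forall g, S g.
Proof.
  intros Ssub Si St g.
  set (E := fun _ : G => False).
  set (tau := swap _ E S).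
  set (conj_trans := fun x => tau^-1 * ltrans x * tau).
  assert (fix_S : forall s, S s -> pfun (ltrans s) S = S).
  { intros s Ss. apply functional_extensionality. intro y. apply propositional_extensionality.
    simpl. apply subgroupMl; [exact Ssub|]. apply Ssub. exact Ss. }
  assert (conj_trans_id : forall s, S s -> conj_trans s = ltrans s).
  { intros s Ss. unfold conj_trans, tau.
    rewrite <- gmulA, swap_commute by (reflexivity || (apply fix_S; exact Ss)).
    apply mulKg. }
  assert (E_trans : conj_trans g = ltrans g).
  { apply HNN_hom_ext; auto.
    - intros x y. unfold conj_trans. rewrite ltrans_hom. gsimpl. reflexivity.
    - apply ltrans_hom. }
  assert (SE : pfun (ltrans g) S = S).
  { transitivity (pfun tau (pfun (conj_trans g) E)).
    - change (pfun (ltrans g) S = pfun tau (pinv tau (pfun (ltrans g) (pfun tau E)))).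
      rewrite pfunK, (swap_fun_l _ E S : pfun tau E = S). reflexivity.
    - rewrite E_trans. exact (swap_fun_l _ E S). }
  assert (e := f_equal (fun A => A g) SE). simpl in e. rewrite gmulVl in e.
  rewrite <- e. apply Ssub.
Qed.
End HNNUniversal.

(** * Britton's normal forms *)

Section NormalForms.
Context {H : Group} {K : H -> Prop} {phi psi : H -> H}.
Hypothesis K_sub : subgroup K.
Hypothesis phi_hom : is_hom phi.
Hypothesis phiK : forall x, psi (phi x) = x.
Hypothesis psiK : forall x, phi (psi x) = x.

Definition assoc (e : bool) : H -> Prop := if e then image phi K else K.

Lemma assoc_sub e : subgroup (assoc e).
Proof.
  destruct e; simpl; [|exact K_sub].
  destruct K_sub as [K1 [KM KV]]. split; [|split].
  - exists 1. split; [exact K1|apply hom1; exact phi_hom].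
  - intros x y [a [Ka <-]] [b [Kb <-]]. exists (a * b). split; [apply KM; auto|apply phi_hom].
  - intros x [a [Ka <-]]. exists (a^-1). split; [apply KV; auto|apply homV; exact phi_hom].
Qed.

Lemma assoc1 e : assoc e 1.
Proof. apply assoc_sub. Qed.

Definition coset_rep (e : bool) (x : H) : H :=
  if excluded_middle_informative (assoc e x) then 1
  else epsilon (inhabits 1) (fun y => assoc e (x^-1 * y)).

Lemma coset_repP e x : assoc e (x^-1 * coset_rep e x).
Proof.
  unfold coset_rep. destruct (excluded_middle_informative (assoc e x)) as [Ax|_].
  - rewrite gmul1r. apply (subgroupV (assoc e) x (assoc_sub e)). exact Ax.
  - apply epsilon_spec. exists x. rewrite gmulVl. apply assoc1.
Qed.

Lemma coset_repVP e x : assoc e ((coset_rep e x)^-1 * x).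
Proof.
  apply (subgroupV (assoc e) _ (assoc_sub e)). rewrite invMg, invgK. apply coset_repP.
Qed.

Lemma coset_rep_eq e x y : assoc e (x^-1 * y) -> coset_rep e x = coset_rep e y.
Proof.
  intro Axy. unfold coset_rep.
  assert (same_coset : forall z, assoc e (x^-1 * z) <-> assoc e (y^-1 * z)).
  { intro z. rewrite <- (subgroupMl (assoc e) (x^-1 * y) (y^-1 * z) (assoc_sub e) Axy). gsimpl. tauto. }
  assert (Exy : assoc e x <-> assoc e y).
  { rewrite <- (subgroupV (assoc e) x (assoc_sub e)), <- (subgroupV (assoc e) y (assoc_sub e)),
      <- (gmul1r (x^-1)), <- (gmul1r (y^-1)).
    apply same_coset. }
  replace (fun z => assoc e (x^-1 * z)) with (fun z => assoc e (y^-1 * z))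
    by (apply functional_extensionality; intro z; apply propositional_extensionality,
        iff_sym, same_coset).
  destruct (excluded_middle_informative (assoc e x)), (excluded_middle_informative (assoc e y));
    tauto.
Qed.

Lemma coset_rep_in e x : assoc e x -> coset_rep e x = 1.
Proof. intro Ax. unfold coset_rep. destruct (excluded_middle_informative (assoc e x)); tauto. Qed.

Lemma coset_rep_eq1 e x : coset_rep e x = 1 -> assoc e x.
Proof.
  intro E. assert (Ax := coset_repP e x). rewrite E, gmul1r in Ax.
  apply (subgroupV (assoc e) x (assoc_sub e)). exact Ax.
Qed.

Lemma coset_repK e x : coset_rep e (coset_rep e x) = coset_rep e x.
Proof. symmetry. apply coset_rep_eq, coset_repP. Qed.

Definition shift (e : bool) : H -> H := if e then psi else phi.

Lemma shift_hom e : is_hom (shift e).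
Proof. destruct e; [exact (hom_inverse phi psi phi_hom phiK psiK)|exact phi_hom]. Qed.

Lemma shift_assoc e m : assoc e m -> assoc (negb e) (shift e m).
Proof.
  destruct e; simpl.
  - intros [k [Kk <-]]. rewrite phiK. exact Kk.
  - intro Km. exists m. auto.
Qed.

(* The letter (c, true) stands for c t and (c, false) for c t^-1 (see eval_word). *)
Definition word := list (H * bool).

(* h c t^e = c' t^e (shift e (c'^-1 h c)), where c' represents the coset of h c. *)
Fixpoint act_h (h : H) (w : word) : word * H :=
  match w with
  | [] => ([], h)
  | (c, e) :: rest =>
      let c' := coset_rep e (h * c) in
      let p := act_h (shift e (c'^-1 * (h * c))) rest in
      ((c', e) :: fst p, snd p)
  end.

Definition cancels (e : bool) (w : word) : Prop :=
  match w with [] => False | (c, e') :: _ => c = 1 /\ e' = negb e end.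

Definition act_tpow (e : bool) (w : word) : word :=
  if excluded_middle_informative (cancels e w) then tl w else (1, e) :: w.

Fixpoint reduced (w : word) : Prop :=
  match w with
  | [] => True
  | (c, e) :: rest => coset_rep e c = c /\ reduced rest /\ ~ cancels e rest
  end.

Lemma act_h_cancels e h w :
  reduced w -> assoc (negb e) h -> cancels e (fst (act_h h w)) -> cancels e w.
Proof.
  destruct w as [|[c e'] rest]; simpl; [tauto|].
  intros [Rc _] Ah [E1 ->]. split; [|reflexivity].
  apply coset_rep_eq1 in E1. rewrite <- Rc. apply coset_rep_in.
  apply (subgroupMl _ h c (assoc_sub _) Ah). exact E1.
Qed.

Lemma reduced_act_h h w : reduced w -> reduced (fst (act_h h w)).
Proof.
  revert h. induction w as [|[c e] rest IH]; intros h; simpl; [tauto|].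
  intros [_ [Rrest Nc]]. split; [apply coset_repK|]. split; [apply IH; exact Rrest|].
  intro Cc. apply Nc. refine (act_h_cancels e _ _ Rrest _ Cc).
  apply shift_assoc, coset_repVP.
Qed.

Lemma reduced_act_tpow e w : reduced w -> reduced (act_tpow e w).
Proof.
  unfold act_tpow. destruct (excluded_middle_informative (cancels e w)) as [_|Nc].
  - destruct w as [|[c e'] rest]; simpl; tauto.
  - intro Rw. simpl. split; [apply coset_rep_in, assoc1|]. auto.
Qed.

Lemma act_tpow_nocancel e w : ~ cancels e w -> act_tpow e w = (1, e) :: w.
Proof. intro Nc. unfold act_tpow. destruct (excluded_middle_informative (cancels e w)); tauto. Qed.

Lemma act_tpowK e w : reduced w -> act_tpow (negb e) (act_tpow e w) = w.
Proof.
  intro Rw. unfold act_tpow at 2. destruct (excluded_middle_informative (cancels e w)) as [Cw|Nc].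
  - destruct w as [|[c e'] rest]; simpl in Cw |- *; [tauto|].
    destruct Cw as [-> ->]. apply act_tpow_nocancel.
    destruct Rw as [_ [_ Nc]]. exact Nc.
  - unfold act_tpow. destruct (excluded_middle_informative (cancels (negb e) ((1, e) :: w)))
      as [_|N]; [reflexivity|].
    exfalso. apply N. simpl. rewrite Bool.negb_involutive. auto.
Qed.

Lemma act_h_one w : reduced w -> act_h 1 w = (w, 1).
Proof.
  induction w as [|[c e] rest IH]; intro Rw; simpl; [reflexivity|].
  destruct Rw as [Rc [Rrest _]].
  rewrite gmul1l, Rc, gmulVl, (hom1 _ (shift_hom e)), IH by exact Rrest. reflexivity.
Qed.

Lemma act_h_mul h h' w :
  act_h (h * h') w =
  (fst (act_h h (fst (act_h h' w))), snd (act_h h (fst (act_h h' w))) * snd (act_h h' w)).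
Proof.
  revert h h'. induction w as [|[c e] rest IH]; intros h h'; simpl; [reflexivity|].
  set (r' := coset_rep e (h' * c)).
  assert (E : coset_rep e (h * h' * c) = coset_rep e (h * r')).
  { apply coset_rep_eq.
    replace ((h * h' * c)^-1 * (h * r')) with ((h' * c)^-1 * r') by (gsimpl; reflexivity).
    apply coset_repP. }
  rewrite E.
  replace ((coset_rep e (h * r'))^-1 * (h * h' * c)) with
    (((coset_rep e (h * r'))^-1 * (h * r')) * (r'^-1 * (h' * c))) by (gsimpl; reflexivity).
  rewrite (shift_hom e), IH. reflexivity.
Qed.

Lemma act_rel k w : K k -> reduced w ->
  act_tpow true (fst (act_h k (act_tpow false w))) = fst (act_h (phi k) w) /\
  snd (act_h k (act_tpow false w)) = snd (act_h (phi k) w).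
Proof.
  intros Kk Rw. destruct (classic (cancels false w)) as [Cw|Nc].
  - destruct w as [|[c e] rest]; simpl in Cw; [tauto|]. destruct Cw as [-> ->].
    replace (act_tpow false ((1, true) :: rest)) with rest
      by (unfold act_tpow; destruct (excluded_middle_informative _) as [_|N]; simpl in *; tauto).
    destruct Rw as [_ [Rrest Nc]]. simpl.
    rewrite coset_rep_in by (exists k; split; [exact Kk|gsimpl; reflexivity]).
    gsimpl. rewrite phiK.
    rewrite act_tpow_nocancel; [split; reflexivity|].
    intro C. apply Nc. exact (act_h_cancels true k rest Rrest Kk C).
  - rewrite (act_tpow_nocancel false w Nc). simpl. rewrite coset_rep_in by (gsimpl; exact Kk).
    gsimpl.
    unfold act_tpow. destruct (excluded_middle_informative _) as [_|N]; [split; reflexivity|].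
    exfalso. apply N. simpl. auto.
Qed.

Lemma act_h_fixed_nil w : (exists h0, ~ K h0) -> (forall h, fst (act_h h w) = w) -> w = [].
Proof.
  intros [h0 Nh0] Fix. destruct w as [|[c e] rest]; [reflexivity|exfalso].
  assert (ex_s : exists s, ~ assoc e s).
  { destruct e; simpl.
    - exists (phi h0). intros [k [Kk E]]. apply Nh0. rewrite <- (phiK h0), <- E, phiK. exact Kk.
    - exists h0. exact Nh0. }
  destruct ex_s as [s Ns].
  assert (E := Fix (c * s * c^-1)). simpl in E. injection E as E _.
  replace (c * s * c^-1 * c) with (c * s) in E by (gsimpl; reflexivity).
  assert (Acs := coset_repP e (c * s)). rewrite E in Acs.
  apply Ns, (subgroupV (assoc e) s (assoc_sub e)).
  replace (s^-1) with ((c * s)^-1 * c) by (gsimpl; reflexivity). exact Acs.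
Qed.

Definition normal_form := ({w : word | reduced w} * H)%type.

Lemma normal_form_eq (p q : normal_form) :
  proj1_sig (fst p) = proj1_sig (fst q) -> snd p = snd q -> p = q.
Proof.
  destruct p as [[w Rw] x], q as [[w' Rw'] x']; simpl; intros -> ->.
  rewrite (proof_irrelevance _ Rw Rw'). reflexivity.
Qed.

Definition nf_h (h : H) (p : normal_form) : normal_form :=
  (exist reduced (fst (act_h h (proj1_sig (fst p)))) (reduced_act_h h _ (proj2_sig (fst p))),
   snd (act_h h (proj1_sig (fst p))) * snd p).

Definition nf_tpow (e : bool) (p : normal_form) : normal_form :=
  (exist reduced (act_tpow e (proj1_sig (fst p))) (reduced_act_tpow e _ (proj2_sig (fst p))),
   snd p).

Lemma nf_h_mul h h' p : nf_h (h * h') p = nf_h h (nf_h h' p).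
Proof.
  destruct p as [[w Rw] x]. apply normal_form_eq; simpl; rewrite act_h_mul; simpl;
    [reflexivity|symmetry; apply gmulA].
Qed.

Lemma nf_h_one p : nf_h 1 p = p.
Proof.
  destruct p as [[w Rw] x]. apply normal_form_eq; simpl; rewrite act_h_one by exact Rw;
    simpl; [reflexivity|apply gmul1l].
Qed.

Lemma nf_hK h p : nf_h h (nf_h (h^-1) p) = p.
Proof. rewrite <- nf_h_mul, gmulVr. apply nf_h_one. Qed.

Lemma nf_tpowK e p : nf_tpow (negb e) (nf_tpow e p) = p.
Proof. destruct p as [[w Rw] x]. apply normal_form_eq; simpl; [apply act_tpowK, Rw|reflexivity]. Qed.

Definition perm_h (h : H) : Sym normal_form.
refine (Perm (nf_h h) (nf_h (h^-1)) (nf_hK h) _).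
intro p. rewrite <- (invgK h) at 2. apply nf_hK.
Defined.

Definition perm_tpow (e : bool) : Sym normal_form.
refine (Perm (nf_tpow e) (nf_tpow (negb e)) _ (nf_tpowK e)).
intro p. rewrite <- (Bool.negb_involutive e) at 1. apply nf_tpowK.
Defined.

Lemma perm_h_hom : is_hom perm_h.
Proof. intros h h'. apply perm_ext. intro p. apply nf_h_mul. Qed.

Lemma perm_tpowV : (perm_tpow true)^-1 = perm_tpow false.
Proof. apply perm_ext. reflexivity. Qed.

Lemma perm_rel k : K k -> perm_tpow true * perm_h k * (perm_tpow true)^-1 = perm_h (phi k).
Proof.
  intro Kk. apply perm_ext. intros [[w Rw] x].
  destruct (act_rel k w Kk Rw) as [E1 E2].
  apply normal_form_eq; simpl; [exact E1|rewrite E2; reflexivity].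
Qed.

Context {G : Group} {i : H -> G} {t : G}.
Hypothesis HN : is_HNN K phi i t.

Definition tpow (e : bool) : G := if e then t else t^-1.

Lemma tpow_shift e m : assoc e m -> tpow e * i (shift e m) = i m * tpow e.
Proof.
  destruct e; simpl.
  - intros [k [Kk <-]]. rewrite phiK. exact (HNN_rel HN k Kk).
  - intro Km. apply (mulgI t). rewrite mulKVg, !gmulA, (HNN_rel HN m Km), mulgK. reflexivity.
Qed.

Fixpoint eval_word (w : word) : G :=
  match w with [] => 1 | (c, e) :: rest => i c * tpow e * eval_word rest end.

Lemma eval_act_h h w : eval_word (fst (act_h h w)) * i (snd (act_h h w)) = i h * eval_word w.
Proof.
  revert h. induction w as [|[c e] rest IH]; intro h; simpl; [gsimpl; reflexivity|].
  rewrite <- gmulA, IH, gmulA, <- (gmulA (i _)), tpow_shift by apply coset_repVP.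
  rewrite gmulA, <- (HNN_hom HN), mulKVg, (HNN_hom HN). gsimpl. reflexivity.
Qed.

Lemma eval_act_tpow e w : eval_word (act_tpow e w) = tpow e * eval_word w.
Proof.
  unfold act_tpow. destruct (excluded_middle_informative (cancels e w)) as [Cw|_].
  - destruct w as [|[c e'] rest]; simpl in Cw |- *; [tauto|]. destruct Cw as [-> ->].
    rewrite (hom1 _ (HNN_hom HN)), gmul1l, gmulA.
    replace (tpow e * tpow (negb e)) with (1 : G) by (destruct e; simpl; gsimpl; reflexivity).
    symmetry. apply gmul1l.
  - simpl. rewrite (hom1 _ (HNN_hom HN)), gmul1l. reflexivity.
Qed.

Definition eval_nf (p : normal_form) : G := eval_word (proj1_sig (fst p)) * i (snd p).

Definition nf1 : normal_form := (exist reduced [] I, 1).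

Lemma nf_action_exists : exists F : G -> Sym normal_form,
  is_hom F /\ (forall h, F (i h) = perm_h h) /\ F t = perm_tpow true.
Proof.
  destruct HN as [_ [_ U]].
  destruct (U _ perm_h (perm_tpow true) perm_h_hom perm_rel) as [F [F_hom [F_i [F_t _]]]].
  exists F. auto.
Qed.

Section Action.
Variable F : G -> Sym normal_form.
Hypothesis F_hom : is_hom F.
Hypothesis F_i : forall h, F (i h) = perm_h h.
Hypothesis F_t : F t = perm_tpow true.

Lemma F_tpow e : F (tpow e) = perm_tpow e.
Proof. destruct e; simpl; [exact F_t|]. rewrite (homV _ F_hom), F_t. apply perm_tpowV. Qed.

Lemma eval_nf_act g p : eval_nf (pfun (F g) p) = g * eval_nf p.
Proof.
  revert p. apply (HNN_generated HN (fun g => forall p, eval_nf (pfun (F g) p) = g * eval_nf p)).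
  - split; [|split].
    + intro p. rewrite (hom1 _ F_hom), gmul1l. reflexivity.
    + intros x y Ex Ey p. rewrite F_hom. simpl. rewrite Ex, Ey. apply gmulA.
    + intros x Ex p. rewrite (homV _ F_hom). simpl.
      rewrite <- (mulKg x (eval_nf (pinv (F x) p))), <- Ex, pfunK. reflexivity.
  - intros h [[w Rw] x]. rewrite F_i. unfold eval_nf; simpl.
    rewrite (HNN_hom HN), gmulA, eval_act_h. gsimpl. reflexivity.
  - intros [[w Rw] x]. rewrite F_t. unfold eval_nf; simpl.
    rewrite (eval_act_tpow true). gsimpl. reflexivity.
Qed.

Lemma act_eval_word w (Rw : reduced w) x : pfun (F (eval_word w * i x)) nf1 = (exist reduced w Rw, x).
Proof.
  revert Rw x. induction w as [|[c e] rest IH]; intros Rw x.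
  - simpl. rewrite gmul1l, F_i. apply normal_form_eq; simpl; [reflexivity|apply gmul1r].
  - destruct Rw as [Rc [Rrest Nc]].
    replace (eval_word ((c, e) :: rest) * i x) with (i c * (tpow e * (eval_word rest * i x)))
      by (simpl; gsimpl; reflexivity).
    rewrite F_hom, (F_hom (tpow e)), F_i, F_tpow. simpl. rewrite (IH Rrest x).
    apply normal_form_eq; simpl; rewrite (act_tpow_nocancel e rest Nc); simpl;
      rewrite gmul1r, Rc, gmulVl, (hom1 _ (shift_hom e)), act_h_one by exact Rrest;
      simpl; [reflexivity|apply gmul1l].
Qed.

End Action.

Lemma HNN_inj h h' : i h = i h' -> h = h'.
Proof.
  destruct nf_action_exists as [F [F_hom [F_i F_t]]].
  intro E. assert (E' := f_equal (fun g => snd (pfun (F g) nf1)) E). simpl in E'.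
  rewrite !F_i in E'. simpl in E'. rewrite !gmul1r in E'. exact E'.
Qed.

Lemma HNN_centralizer (W : G) :
  (exists h0, ~ K h0) -> (forall h, W * i h = i h * W) -> exists x, W = i x.
Proof.
  destruct nf_action_exists as [F [F_hom [F_i F_t]]].
  intros K_proper CW.
  destruct (pfun (F W) nf1) as [[w Rw] x] eqn:EW.
  assert (EvW : W = eval_word w * i x).
  { assert (E := eval_nf_act F F_hom F_i F_t W nf1). rewrite EW in E. unfold eval_nf in E. simpl in E.
    rewrite (hom1 _ (HNN_hom HN)), !gmul1r in E. symmetry. exact E. }
  assert (w_nil : w = []).
  { apply (act_h_fixed_nil w K_proper). intro h.
    assert (E := act_eval_word F F_hom F_i F_t w Rw (x * h)).
    rewrite (HNN_hom HN), gmulA, <- EvW, CW, F_hom in E. simpl in E. rewrite EW, F_i in E.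
    exact (f_equal (fun p => proj1_sig (fst p)) E). }
  exists x. rewrite EvW, w_nil. apply gmul1l.
Qed.

Lemma HNN_conj_t u v : t * i u * t^-1 = i v -> K u.
Proof.
  destruct nf_action_exists as [F [F_hom [F_i F_t]]].
  intro E. apply NNPP. intro Nu.
  assert (E' := f_equal (fun g => proj1_sig (fst (pfun (F g) nf1))) E). simpl in E'.
  rewrite !F_hom, (homV _ F_hom), F_t, perm_tpowV, !F_i in E'. simpl in E'.
  rewrite (act_tpow_nocancel false []) in E' by (simpl; tauto). simpl in E'.
  rewrite act_tpow_nocancel in E'; [discriminate|].
  intros [C1 _]. apply Nu. rewrite <- (gmul1r u). exact (coset_rep_eq1 false _ C1).
Qed.
End NormalForms.

(** * The automorphisms alpha_(delta, a) *)

Section HNNAutomorphisms.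
Context {H : Group} {K : H -> Prop} {phi : H -> H} {G : Group} {i : H -> G} {t : G}.
Hypothesis HN : is_HNN K phi i t.

Let i_hom := HNN_hom HN.

Lemma HNN_endo_exists (delta : H -> H) (a : H) :
  is_hom delta -> (forall k, K k -> K (delta k)) ->
  (forall k, K k -> phi (delta k) = a^-1 * delta (phi k) * a) ->
  exists F : G -> G, is_hom F /\ (forall h, F (i h) = i (delta h)) /\ F t = i a * t.
Proof.
  intros delta_hom delta_K compat. pose proof HN as [_ [rel U]].
  destruct (U G (fun h => i (delta h)) (i a * t)) as [F [F_hom [F_i [F_t _]]]].
  - intros x y. rewrite delta_hom. apply i_hom.
  - intros k Kk.
    replace (i a * t * i (delta k) * (i a * t)^-1) with (i a * (t * i (delta k) * t^-1) * (i a)^-1)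
      by (gsimpl; reflexivity).
    rewrite rel, compat by auto. rewrite <- (homV _ i_hom), <- !i_hom. gsimpl. reflexivity.
  - exists F. auto.
Qed.

Lemma HNN_endo_id (F : G -> G) :
  is_hom F -> (forall h, F (i h) = i h) -> F t = t -> forall g, F g = g.
Proof. intros F_hom F_i F_t. apply (HNN_hom_ext HN); auto. intros x y. reflexivity. Qed.

(* The inverse of alpha_(delta, a) is alpha_(delta', delta'(a)^-1). *)
Lemma is_alpha_exists (delta delta' : H -> H) (a : H) :
  is_hom delta -> (forall h, delta' (delta h) = h) -> (forall h, delta (delta' h) = h) ->
  (forall k, K k <-> K (delta k)) ->
  (forall k, K k -> phi (delta k) = a^-1 * delta (phi k) * a) ->
  exists alpha, is_alpha i t delta a alpha.
Proof.
  intros delta_hom delta'K deltaK delta_K compat.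
  assert (delta'_hom := hom_inverse delta delta' delta_hom delta'K deltaK).
  destruct (HNN_endo_exists delta a delta_hom (fun k => proj1 (delta_K k)) compat)
    as [F [F_hom [F_i F_t]]].
  destruct (HNN_endo_exists delta' (delta' (a^-1)) delta'_hom) as [F' [F'_hom [F'_i F'_t]]].
  - intros k Kk. apply delta_K. rewrite deltaK. exact Kk.
  - intros k Kk. rewrite <- (homV _ delta'_hom), <- !delta'_hom, invgK.
    assert (E := compat (delta' k)). rewrite deltaK in E.
    rewrite <- (delta'K (phi (delta' k))) at 1. f_equal.
    rewrite E by (apply delta_K; rewrite deltaK; exact Kk). gsimpl. reflexivity.
  - exists F. split; [split; [exact F_hom|exists F']|split; assumption].
    split; apply HNN_endo_id.
    + intros x y. rewrite F_hom, F'_hom. reflexivity.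
    + intro h. rewrite F_i, F'_i, delta'K. reflexivity.
    + rewrite F_t, F'_hom, F'_t, F'_i, gmulA, <- i_hom, <- delta'_hom, gmulVr,
        (hom1 _ delta'_hom), (hom1 _ i_hom). apply gmul1l.
    + intros x y. rewrite F'_hom, F_hom. reflexivity.
    + intro h. rewrite F'_i, F_i, deltaK. reflexivity.
    + rewrite F'_t, F_hom, F_t, F_i, gmulA, <- i_hom, deltaK, gmulVl, (hom1 _ i_hom). apply gmul1l.
Qed.

Lemma is_alpha_comp {delta delta' delta'' a a' alpha alpha'} :
  is_alpha i t delta a alpha -> is_alpha i t delta' a' alpha' ->
  (forall h, delta'' h = delta' (delta h)) ->
  is_alpha i t delta'' (delta' a * a') (comp_lr alpha alpha').
Proof.
  intros [A_aut [A_i A_t]] [A'_aut [A'_i A'_t]] E. unfold comp_lr.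
  split; [exact (is_aut_comp A_aut A'_aut)|split].
  - intro h. rewrite A_i, A'_i, E. reflexivity.
  - rewrite A_t, (proj1 A'_aut), A'_i, A'_t, i_hom. apply gmulA.
Qed.

Lemma is_alpha_inner delta delta' a alpha k :
  K k -> is_alpha i t delta a alpha -> (forall h, delta' h = k^-1 * delta h * k) ->
  is_alpha i t delta' (k^-1 * a * phi k) (fun x => (i k)^-1 * alpha x * i k).
Proof.
  intros Kk [A_aut [A_i A_t]] E. split; [exact (is_aut_conj (i k) A_aut)|split].
  - intro h. rewrite A_i, E, !i_hom, (homV _ i_hom). reflexivity.
  - rewrite A_t. gsimpl. rewrite (HNN_rel HN k Kk), !i_hom, (homV _ i_hom). gsimpl. reflexivity.
Qed.
End HNNAutomorphisms.

(** * The map chi_2 *)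

Section OuterClasses.
Context {H : Group} {K : H -> Prop} {phi psi : H -> H} {G : Group} {i : H -> G} {t : G}.
Hypothesis K_sub : subgroup K.
Hypothesis K_proper : exists h0, ~ K h0.
Hypothesis phi_hom : is_hom phi.
Hypothesis phiK : forall x, psi (phi x) = x.
Hypothesis psiK : forall x, phi (psi x) = x.
Hypothesis HN : is_HNN K phi i t.

Let i_hom := HNN_hom HN.

Lemma center_phi z : center z -> center (phi z).
Proof. intros Cz y. rewrite <- (psiK y), <- !phi_hom, Cz. reflexivity. Qed.

Lemma in_V_comp b a alpha b' a' alpha' :
  in_V K phi i t b a alpha -> in_V K phi i t b' a' alpha' ->
  in_V K phi i t (b * b') (b'^-1 * a * b' * a') (comp_lr alpha alpha').
Proof.
  intros [Nb [Cb Ab]] [Nb' [Cb' Ab']]. split; [exact (normalizerM K b b' Nb Nb')|split].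
  - replace (b * b' * (b'^-1 * a * b' * a') * (phi (b * b'))^-1)
      with (b * a * (phi b)^-1 * (phi b * (b' * a' * (phi b')^-1) * (phi b)^-1))
      by (rewrite phi_hom; gsimpl; reflexivity).
    apply centralizerM; [exact Cb|].
    exact (centralizer_conj _ _ _ (normalizer_image K phi b phi_hom Nb) Cb').
  - apply (is_alpha_comp HN Ab Ab'). intro h. unfold gamma. gsimpl. reflexivity.
Qed.

Lemma in_V_gamma n : normalizer K n -> exists alpha, in_V K phi i t n (n^-1 * phi n) alpha.
Proof.
  intro Nn.
  destruct (is_alpha_exists HN (gamma n) (gamma (n^-1)) (n^-1 * phi n) (gamma_hom n)
              (gammaK n)) as [alpha A].
  - intro h. rewrite <- (invgK n) at 1. apply gammaK.
  - exact Nn.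
  - intros k _. unfold gamma. rewrite !phi_hom, (homV _ phi_hom). gsimpl. reflexivity.
  - exists alpha. split; [exact Nn|split; [|exact A]].
    replace (n * (n^-1 * phi n) * (phi n)^-1) with (1 : H) by (gsimpl; reflexivity).
    apply centralizer_center, center1.
Qed.

(* i(b) g i(b')^-1 centralises i(H), so it is i(x) for a central x. *)
Lemma conj_gamma_in_center (g : G) b b' :
  (forall h, i (gamma b' h) = g^-1 * i (gamma b h) * g) ->
  exists x, center x /\ g = i (x * (b^-1 * b')).
Proof.
  intro Eg.
  set (W := i b * g * (i b')^-1).
  assert (CW : forall h, W * i h = i h * W).
  { intro h. unfold W.
    replace (i b * g * (i b')^-1 * i h) with (i b * g * i (gamma b' h) * (i b')^-1)
      by (unfold gamma; rewrite !i_hom, (homV _ i_hom); gsimpl; reflexivity).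
    rewrite Eg. unfold gamma. rewrite !i_hom, (homV _ i_hom). gsimpl. reflexivity. }
  destruct (HNN_centralizer K_sub phi_hom phiK psiK HN W K_proper CW) as [x Ex].
  exists x. split.
  - intro h. apply (HNN_inj K_sub phi_hom phiK psiK HN). rewrite !i_hom, <- Ex. apply CW.
  - rewrite !i_hom, <- Ex, gmulA, CW. unfold W. rewrite (homV _ i_hom). gsimpl. reflexivity.
Qed.

Lemma same_outer_cosetZK b a alpha b' a' alpha' :
  in_V K phi i t b a alpha -> in_V K phi i t b' a' alpha' ->
  same_outer alpha alpha' -> same_cosetZK K b b'.
Proof.
  intros [_ [_ [_ [Ai At]]]] [_ [_ [_ [Ai' At']]]] [g Eg].
  destruct (conj_gamma_in_center g b b') as [x [Cx Eg_x]].
  { intro h. rewrite <- Ai, <- Ai'. apply Eg. }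
  set (u := x * (b^-1 * b')).
  assert (Ku : K u).
  { apply (HNN_conj_t K_sub phi_hom phiK psiK HN u (a^-1 * u * a')).
    assert (E := Eg t). rewrite At, At', Eg_x in E. fold u in E.
    rewrite !i_hom, (homV _ i_hom).
    replace (i a') with (i a' * t * t^-1) by (gsimpl; reflexivity).
    rewrite E. gsimpl. reflexivity. }
  exists (x^-1), u. split; [exact (centerV x Cx)|split; [exact Ku|]].
  unfold u. gsimpl. reflexivity.
Qed.

Lemma in_V_kernel b a alpha :
  in_V K phi i t b a alpha -> same_cosetZK K b 1 ->
  exists a' alpha', centralizer (image phi K) a' /\
    is_alpha i t (fun h => h) a' alpha' /\ same_outer alpha alpha'.
Proof.
  intros [_ [Cb Ab]] [z [k [Cz [Kk Ezk]]]].
  rewrite gmul1r in Ezk. assert (Eb : b = k^-1 * z^-1) by (rewrite <- (invgK b), Ezk; apply invMg).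
  subst b.
  exists (k^-1 * a * phi k), (fun x => (i k)^-1 * alpha x * i k). split; [|split].
  - replace (k^-1 * a * phi k)
      with (k^-1 * z^-1 * a * (phi (k^-1 * z^-1))^-1 * (z^-1 * phi z)^-1).
    + apply centralizerM; [exact Cb|]. apply centralizer_center, centerV, centerM.
      * exact (centerV z Cz).
      * exact (center_phi z Cz).
    + rewrite phi_hom, !(homV _ phi_hom). gsimpl.
      rewrite (centerV z Cz (a * _)). gsimpl.
      rewrite (center_phi z Cz (phi k * _)). gsimpl. reflexivity.
  - apply (is_alpha_inner HN _ _ _ _ k Kk Ab). intro h. unfold gamma.
    gsimpl. rewrite (Cz (k * _)). gsimpl. rewrite <- (Cz k). gsimpl. reflexivity.
  - exists (i k). reflexivity.
Qed.

Lemma in_V_one a' alpha' :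
  centralizer (image phi K) a' -> is_alpha i t (fun h => h) a' alpha' -> in_V K phi i t 1 a' alpha'.
Proof.
  intros Ca' [A_aut [A_i A_t]]. split; [apply normalizer1|split].
  - rewrite (hom1 _ phi_hom), invg1, gmul1l, gmul1r. exact Ca'.
  - split; [exact A_aut|split; [|exact A_t]]. intro h. rewrite A_i. unfold gamma. gsimpl. reflexivity.
Qed.
End OuterClasses.

Theorem lemma4p4 (H : Group) (K : H -> Prop) (phi : H -> H)
  (G : Group) (i : H -> G) (t : G) :
  proper_subgroup K -> is_aut phi -> is_HNN K phi i t ->
  (forall b a alpha b' a' alpha',
     in_V K phi i t b a alpha -> in_V K phi i t b' a' alpha' ->
     same_outer alpha alpha' -> same_cosetZK K b b') /\
  (forall b a alpha b' a' alpha',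
     in_V K phi i t b a alpha -> in_V K phi i t b' a' alpha' ->
     (exists b'' a'' beta, in_V K phi i t b'' a'' beta /\
        same_outer (comp_lr alpha alpha') beta) /\
     (forall b'' a'' beta, in_V K phi i t b'' a'' beta ->
        same_outer (comp_lr alpha alpha') beta -> same_cosetZK K (b * b') b'')) /\
  (forall n, normalizer K n ->
     exists b a alpha, in_V K phi i t b a alpha /\ same_cosetZK K b n) /\
  (forall b a alpha, in_V K phi i t b a alpha ->
     (same_cosetZK K b 1 <->
      exists a' alpha', centralizer (image phi K) a' /\
        is_alpha i t (fun h => h) a' alpha' /\ same_outer alpha alpha')).
Proof.
  intros [K_sub K_proper] [phi_hom [psi [phiK psiK]]] HN.
  assert (well_defined := same_outer_cosetZK K_sub K_proper phi_hom phiK psiK HN).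
  split; [exact well_defined|split; [|split]].
  - intros b a alpha b' a' alpha' Vb Vb'.
    assert (V_comp := in_V_comp phi_hom HN _ _ _ _ _ _ Vb Vb').
    split.
    + exists (b * b'), (b'^-1 * a * b' * a'), (comp_lr alpha alpha').
      split; [exact V_comp|apply same_outer_refl].
    + intros b'' a'' beta Vb''. exact (well_defined _ _ _ _ _ _ V_comp Vb'').
  - intros n Nn. destruct (in_V_gamma phi_hom HN n Nn) as [alpha Vn].
    exists n, (n^-1 * phi n), alpha. split; [exact Vn|exact (same_cosetZK_refl K n K_sub)].
  - intros b a alpha Vb. split.
    + exact (in_V_kernel phi_hom psiK HN b a alpha Vb).
    + intros [a' [alpha' [Ca' [A' Eout]]]].
      exact (well_defined _ _ _ _ _ _ Vb (in_V_one phi_hom a' alpha' Ca' A') Eout).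
Qed.
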